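(* Let $X$ be a coverable vertex parameter, let $G$ be a graph, and let $v\in V(G)$. If $X(G)=X(G-v)+1$, then $\mathcal{R}^{\mathrm{TE}}_X(G-v)$ is isomorphic to a subgraph of $\mathcal{R}^{\mathrm{TE}}_X(G)$ and $\mathcal{R}^{\mathrm{TS}}_X(G-v)$ is isomorphic to a subgraph of $\mathcal{R}^{\mathrm{TS}}_X(G)$.
   Context: All graphs are finite and simple. A graph parameter $X$ is a vertex parameter defined by property $x$ if for every graph $G$, $X(G)$ equals either (for every graph) the maximum, or (for every graph) the minimum, of $|B|$ over all $B\subseteq V(G)$ having property $x$ in $G$. $X$ is coverable if for every graph $G$ and every $v\in V(G)$, whenever $B$ has property $x$ in $G-v$, the set $B\cup\{v\}$ has property $x$ in $G$. The token exchange graph $\mathcal{R}^{\mathrm{TE}}_X(G)$ has as vertices all $S\subseteq V(G)$ with $|S|=X(G)$ having property $x$ in $G$, with $S_1S_2$ an edge iff there exist $v_1\in S_1\setminus S_2$, $v_2\in S_2\setminus S_1$ with $S_1\setminus\{v_1\}=S_2\setminus\{v_2\}$; the token sliding graph $\mathcal{R}^{\mathrm{TS}}_X(G)$ has the same vertices with the additional requirement $v_1v_2\in E(G)$. *)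

From mathcomp Require Import all_boot.
Set Implicit Arguments. Unset Strict Implicit. Unset Printing Implicit Defensive.

Record sgraph := SGraph {
  vert : finType;
  adj : rel vert;
  adj_sym : symmetric adj;
  adj_irr : irreflexive adj }.

Section Del.
Variables (G : sgraph) (v : vert G).
Definition del_vert : finType := {u : vert G | u != v}.
Definition del_adj : rel del_vert := fun a b => adj (val a) (val b).
Lemma del_adj_sym : symmetric del_adj.
Proof. by move=> a b; rewrite /del_adj adj_sym. Qed.
Lemma del_adj_irr : irreflexive del_adj.
Proof. by move=> a; rewrite /del_adj adj_irr. Qed.
Arguments del_vert : clear implicits.
Definition del : sgraph := SGraph del_adj_sym del_adj_irr.
End Del.
Arguments del : clear implicits.

Definition vprop := forall G : sgraph, {set vert G} -> Prop.

Definition is_max_card (x : vprop) (G : sgraph) (k : nat) : Prop :=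
  (exists B, x G B /\ #|B| = k) /\ (forall B, x G B -> #|B| <= k).
Definition is_min_card (x : vprop) (G : sgraph) (k : nat) : Prop :=
  (exists B, x G B /\ #|B| = k) /\ (forall B, x G B -> k <= #|B|).

Definition vertex_param_by (x : vprop) (X : sgraph -> nat) : Prop :=
  (forall G, is_max_card x G (X G)) \/ (forall G, is_min_card x G (X G)).

Definition coverable (x : vprop) : Prop :=
  forall (G : sgraph) (v : vert G) (B : {set vert (del G v)}),
    x (del G v) B -> x G ((fun u : vert (del G v) => val u) @: B :|: [set v]).

Definition R_vert (x : vprop) (X : sgraph -> nat) (G : sgraph)
  (S : {set vert G}) : Prop := #|S| = X G /\ x G S.

Definition TE_adj (G : sgraph) (S1 S2 : {set vert G}) : Prop :=
  exists v1 v2, v1 \in S1 :\: S2 /\ v2 \in S2 :\: S1 /\ S1 :\ v1 = S2 :\ v2.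

Definition TS_adj (G : sgraph) (S1 S2 : {set vert G}) : Prop :=
  exists v1 v2, v1 \in S1 :\: S2 /\ v2 \in S2 :\: S1 /\ S1 :\ v1 = S2 :\ v2
                /\ adj v1 v2.

(* The graph (V1, E1) (vertices: elements of T1 satisfying V1) is isomorphic
   to a subgraph of (V2, E2): there is an injective map on vertices sending
   edges to edges. *)
Definition embeds_in (T1 T2 : Type) (V1 : T1 -> Prop) (E1 : T1 -> T1 -> Prop)
  (V2 : T2 -> Prop) (E2 : T2 -> T2 -> Prop) : Prop :=
  exists f : T1 -> T2,
    (forall a, V1 a -> V2 (f a)) /\
    (forall a b, V1 a -> V1 b -> f a = f b -> a = b) /\
    (forall a b, V1 a -> V1 b -> E1 a b -> E2 (f a) (f b)).
Arguments R_vert : clear implicits.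
Arguments TE_adj : clear implicits.
Arguments TS_adj : clear implicits.

From mathcomp Require Import all_boot.

(* The map S |-> S u {v} does the job.  It is injective, raises |S| from
   X(G - v) to X(G), and coverability keeps property x; since v lies in every
   image, the symmetric difference of S1 and S2, hence the exchanged (or slid)
   pair of tokens, is unchanged. *)

Section CoverVertex.

Variables (G : sgraph) (v : vert G).

Definition cover_vertex (S : {set vert (del G v)}) : {set vert G} :=
  val @: S :|: [set v].

Lemma mem_cover_vertex S (u : vert (del G v)) :
  (val u \in cover_vertex S) = (u \in S).
Proof.
rewrite !inE (mem_imset _ _ val_inj).
by have /negbTE -> := valP u; rewrite orbF.
Qed.

Lemma cover_vertex_v S : v \in cover_vertex S.
Proof. by rewrite !inE eqxx orbT. Qed.

Lemma card_cover_vertex S : #|cover_vertex S| = #|S| + 1.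
Proof.
rewrite /cover_vertex setUC cardsU1 (card_imset _ val_inj) addnC.
case: imsetP => [[u _ vu]|//].
by have := valP u; rewrite /= -vu eqxx.
Qed.

Lemma cover_vertex_inj : injective cover_vertex.
Proof. by move=> S1 S2 eqS; apply/setP => u; rewrite -!mem_cover_vertex eqS. Qed.

Lemma cover_vertexD1 S u : cover_vertex S :\ val u = cover_vertex (S :\ u).
Proof.
apply/setP => y; have [->|yNv] := eqVneq y v.
  by rewrite in_setD1 !cover_vertex_v andbT eq_sym (valP u).
have -> : y = val (exist _ y yNv : vert (del G v)) by [].
by rewrite in_setD1 !mem_cover_vertex in_setD1 (inj_eq val_inj).
Qed.

Lemma mem_cover_vertexD S1 S2 u :
  (val u \in cover_vertex S1 :\: cover_vertex S2) = (u \in S1 :\: S2).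
Proof. by rewrite !in_setD !mem_cover_vertex. Qed.

Lemma TE_adj_cover_vertex S1 S2 :
  TE_adj (del G v) S1 S2 -> TE_adj G (cover_vertex S1) (cover_vertex S2).
Proof.
move=> [v1 [v2 [v1D [v2D eqS]]]]; exists (val v1), (val v2).
by rewrite !mem_cover_vertexD !cover_vertexD1 eqS.
Qed.

Lemma TS_adj_cover_vertex S1 S2 :
  TS_adj (del G v) S1 S2 -> TS_adj G (cover_vertex S1) (cover_vertex S2).
Proof.
move=> [v1 [v2 [v1D [v2D [eqS v12]]]]]; exists (val v1), (val v2).
by rewrite !mem_cover_vertexD !cover_vertexD1 eqS.
Qed.

Lemma R_vert_cover_vertex (x : vprop) (X : sgraph -> nat) S :
  coverable x -> X G = X (del G v) + 1 ->
  R_vert x X (del G v) S -> R_vert x X G (cover_vertex S).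
Proof.
move=> covx XG [cardS xS]; split; first by rewrite card_cover_vertex cardS XG.
exact: covx.
Qed.

End CoverVertex.

Theorem theorem3p6 (x : vprop) (X : sgraph -> nat)
  (hX : vertex_param_by x X) (hcov : coverable x)
  (G : sgraph) (v : vert G) (hv : X G = X (del G v) + 1) :
  embeds_in (R_vert x X (del G v)) (TE_adj (del G v))
            (R_vert x X G) (TE_adj G) /\
  embeds_in (R_vert x X (del G v)) (TS_adj (del G v))
            (R_vert x X G) (TS_adj G).
Proof.
split; exists (cover_vertex G v); split=> [S|]; try exact: R_vert_cover_vertex;
  split=> S1 S2 _ _; try exact: cover_vertex_inj.
- exact: TE_adj_cover_vertex.
- exact: TS_adj_cover_vertex.
Qed.
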